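(* Let $G$ be a finite group and $\xi$ a linear character of $G$. With $SG_2$, $HG_1$ and the characters $\xi\otimes1$, $\xi\otimes\mathrm{sgn}$ of $HG_1$ as in the context, we have (1) $$(\xi\otimes1)\uparrow_{HG_1}^{SG_2}\cong\bigoplus_{\substack{\chi=\xi\otimes\bar\chi\\ \nu_2^\xi(\chi)=1}}S^{(2)}(\chi)\ \oplus\bigoplus_{\substack{\chi=\xi\otimes\bar\chi\\ \nu_2^\xi(\chi)=-1}}S^{(1^2)}(\chi)\ \oplus\bigoplus_{\{\chi,\xi\otimes\bar\chi\},\ \chi\neq\xi\otimes\bar\chi}\big(S^{(1)}(\chi)\otimes S^{(1)}(\xi\otimes\bar\chi)\big)\uparrow_{SG_1\times SG_1}^{SG_2};$$ (2) $$(\xi\otimes\mathrm{sgn})\uparrow_{HG_1}^{SG_2}\cong\bigoplus_{\substack{\chi=\xi\otimes\bar\chi\\ \nu_2^\xi(\chi)=1}}S^{(1^2)}(\chi)\ \oplus\bigoplus_{\substack{\chi=\xi\otimes\bar\chi\\ \nu_2^\xi(\chi)=-1}}S^{(2)}(\chi)\ \oplus\bigoplus_{\{\chi,\xi\otimes\bar\chi\},\ \chi\neq\xi\otimes\bar\chi}\big(S^{(1)}(\chi)\otimes S^{(1)}(\xi\otimes\bar\chi)\big)\uparrow_{SG_1\times SG_1}^{SG_2},$$ where in each case the last sum runs over the unordered pairs $\{\chi,\xi\otimes\bar\chi\}$ of irreducible characters with $\chi\neq\xi\otimes\bar\chi$ (equivalently $\nu_2^\xi(\chi)=0$), each pair taken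 once.
   Context: $G\wr S_m=\{(g_1,\dots,g_m;\sigma)\}$ with multiplication $(g;\sigma)(h;\tau)=(g_1h_{\sigma^{-1}(1)},\dots,g_mh_{\sigma^{-1}(m)};\sigma\tau)$; $SG_m=G\wr S_m$, $SG_1=G$. $HG_1=\{(g,g;\sigma)\}\subset SG_2$, and $(\xi\otimes\varepsilon)(g,g;\sigma)=\xi(g)\varepsilon(\sigma)$ for $\varepsilon\in\{1,\mathrm{sgn}\}$. $\chi$ runs over irreducible characters of $G$, $V_\chi$ affords $\chi$, $\bar\chi$ is the conjugate character and $\xi\otimes\bar\chi:g\mapsto\xi(g)\overline{\chi(g)}$. $\nu_2^\xi(\chi)=\frac{1}{|G|}\sum_{g}\overline{\xi(g)}\chi(g^2)$. For a partition $\lambda$ of $m$, $S^\lambda(\chi)=V_\chi^{\otimes m}\otimes S^\lambda$ ($S^\lambda$ the Specht module) with $(g_1,\dots,g_m;\sigma)(v_1\otimes\cdots\otimes v_m\otimes w)=g_1v_{\sigma^{-1}(1)}\otimes\cdots\otimes g_mv_{\sigma^{-1}(m)}\otimes\sigma w$; so $S^{(1)}(\chi)=V_\chi$. *)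

From HB Require Import structures.
From mathcomp Require Import all_boot all_order all_algebra all_fingroup all_solvable all_field all_character.
Set Implicit Arguments. Unset Strict Implicit. Unset Printing Implicit Defensive.
Import GRing.Theory Num.Theory.
Local Open Scope ring_scope.

(* The wreath product  G wr S_2.  Its elements are triples (g1, g2, s) *)
(* with s : bool encoding sigma in S_2 (s = true <-> sigma = (1 2)).   *)
(* Multiplication, as in the paper:                                     *)
(*  (g;sigma)(h;tau) = (g1 h_{sigma^-1(1)}, g2 h_{sigma^-1(2)}; sigma tau) *)

Section Wreath.
Variable gT : finGroupType.

Definition wr_type : predArgType := (gT * gT * bool)%type.
HB.instance Definition _ := Finite.on wr_type.

Definition wr_mul (x y : wr_type) : wr_type :=
  let: (g1, g2, s) := x in let: (h1, h2, t) := y in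
  if s then ((g1 * h2)%g, (g2 * h1)%g, s (+) t)
       else ((g1 * h1)%g, (g2 * h2)%g, s (+) t).

Definition wr_one : wr_type := (1%g, 1%g, false).

Definition wr_inv (x : wr_type) : wr_type :=
  let: (g1, g2, s) := x in
  if s then ((g2^-1)%g, (g1^-1)%g, s) else ((g1^-1)%g, (g2^-1)%g, s).

Lemma wr_mulA : associative wr_mul.
Proof.
by move=> [[x1 x2] [|]] [[y1 y2] [|]] [[z1 z2] [|]]; rewrite /= !mulgA.
Qed.

Lemma wr_mul1 : left_id wr_one wr_mul.
Proof. by move=> [[x1 x2] s]; rewrite /= !mul1g. Qed.

Lemma wr_mulV : left_inverse wr_one wr_inv wr_mul.
Proof. by move=> [[x1 x2] [|]]; rewrite /= !mulVg. Qed.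

HB.instance Definition _ := Finite_isGroup.Build wr_type wr_mulA wr_mul1 wr_mulV.

Variable G : {group gT}.

Definition SG2 : {group wr_type} :=
  <<[set x : wr_type | (x.1.1 \in G) && (x.1.2 \in G)]>>%G.

Definition HG1 : {group wr_type} :=
  <<[set x : wr_type | (x.1.1 \in G) && (x.1.1 == x.1.2)]>>%G.

Definition SG1xSG1 : {group wr_type} :=
  <<[set x : wr_type | [&& x.1.1 \in G, x.1.2 \in G & ~~ x.2]]>>%G.

End Wreath.

(* if f is not a class function of H this defaults to 0 (it is only    *)
(* ever applied to genuine class functions below).                      *)
Definition mkCF (aT : finGroupType) (H : {group aT}) (f : aT -> algC) : 'CF(H) :=
  insubd (0 : 'CF(H)) [ffun x => (x \in H)%:R * f x].

Definition sgnb (s : bool) : algC := if s then -1 else 1.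

Definition xi_tensor (gT : finGroupType) (G : {group gT}) (xi : 'CF(G))
    (eps : bool -> algC) : 'CF(HG1 G) :=
  mkCF (HG1 G) (fun x => xi x.1.1 * eps x.2).

(* The character of S^lambda(chi) = V_chi^{(x)2} (x) S^lambda, lambda a  *)
(* partition of 2: S^(2) is the trivial and S^(1^2) the sign module of  *)
(* S_2.  The trace of (g1, g2; sigma) on V_chi (x) V_chi (acting by      *)
(* v1 (x) v2 |-> g1 v_{sigma^-1(1)} (x) g2 v_{sigma^-1(2)}) is           *)
(* chi(g1) chi(g2) if sigma = 1 and chi(g1 g2) if sigma = (1 2).         *)
Definition tensor2_trace (gT : finGroupType) (G : {group gT}) (chi : 'CF(G))
    (x : wr_type gT) : algC :=
  if x.2 then chi (x.1.1 * x.1.2)%g else chi x.1.1 * chi x.1.2.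

Definition S2chi (gT : finGroupType) (G : {group gT}) (chi : 'CF(G)) : 'CF(SG2 G) :=
  mkCF (SG2 G) (tensor2_trace chi).

Definition S11chi (gT : finGroupType) (G : {group gT}) (chi : 'CF(G)) : 'CF(SG2 G) :=
  mkCF (SG2 G) (fun x => tensor2_trace chi x * sgnb x.2).

Definition outer_ind (gT : finGroupType) (G : {group gT}) (chi psi : 'CF(G))
    : 'CF(SG2 G) :=
  'Ind[SG2 G] (mkCF (SG1xSG1 G) (fun x => chi x.1.1 * psi x.1.2)).

Definition nu2 (gT : finGroupType) (G : {group gT}) (xi chi : 'CF(G)) : algC :=
  #|G|%:R^-1 * \sum_(g in G) (xi g)^* * chi (g ^+ 2)%g.

From HB Require Import structures.
From mathcomp Require Import all_boot all_order all_algebra all_fingroup all_solvable all_field all_character.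
From mathcomp Require Import ring zify.
Set Implicit Arguments. Unset Strict Implicit. Unset Printing Implicit Defensive.
Import GRing.Theory Num.Theory.
Local Open Scope ring_scope.

(* Both sides are class functions on SG_2 and are compared on the elements
   (g1, g2; 1) and (g1, g2; (1 2)).  On the base group, counting conjugates gives
   (xi (x) eps)^SG_2 (g1, g2; 1) = |C_G(g1)| xi(g2) [g1 ~ g2], which by the second
   orthogonality relation is sum_chi chi(g1) (xi (x) chi-bar)(g2); the involution
   chi |-> xi (x) chi-bar splits this sum into its fixed points and its two-element
   orbits, which give the S^lambda(chi) and the induced summands.  On the swapped
   elements only the S^lambda(chi) with chi fixed survive, with values
   +-eps((1 2)) chi(g1 g2), while the induced character is eps((1 2)) r(g1 g2) with
   r(h) = sum_{u^2 = h} xi(u); a twisted Frobenius-Schur computation gives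
   r = sum_chi nu_2^xi(chi) chi.  Finally nu_2^xi(chi) = n1 - n2 and
   n1 + n2 = [chi = xi (x) chi-bar], where n1, n2 are the multiplicities of
   S^(2)(chi) and S^(1^2)(chi) in (xi (x) 1)^SG_2; hence nu_2^xi(chi) is 0 off the
   fixed points and +-1 on them. *)

Lemma oner_neqN1 (R : numDomainType) : (1 : R) != -1.
Proof. by rewrite -subr_eq0 opprK -mulr2n mulrn_eq0 oner_eq0. Qed.

Lemma sum_involution (I : finType) (V : nmodType) (t : I -> I) (P : {set I}) (F : I -> V) :
    involutive t -> {in P, forall i, i != t i} ->
    (forall i, i != t i -> (i \in P) != (t i \in P)) ->
  \sum_i F i = \sum_(i | i == t i) F i + \sum_(i in P) (F i + F (t i)).
Proof.
move=> tK P_moved P_choice; rewrite (bigID (fun i => i == t i)) /=; congr (_ + _).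
rewrite big_split /= (bigID (mem P)) /=; congr (_ + _).
  by apply: eq_bigl => i; case: (boolP (i \in P)) => Pi; rewrite ?andbT ?andbF ?P_moved.
rewrite (reindex t) /=; last by exists t => i _; rewrite tK.
apply: eq_bigl => i; rewrite tK eq_sym.
have [fix_i|moved_i] := eqVneq i (t i).
  by apply/esym/negbTE/negP => /P_moved; rewrite -fix_i eqxx.
by move: (P_choice i moved_i); case: (i \in P); case: (t i \in P).
Qed.

Lemma sum_conjg_eq (R : pzSemiRingType) (gT : finGroupType) (G : {group gT}) (x h : gT) :
  x \in G -> \sum_(a in G) ((x ^ a)%g == h)%:R = #|'C_G[x]%g|%:R *+ (h \in x ^: G)%g :> R.
Proof.
move=> Gx; have [/imsetP[d Gd ->]|nxGh] := boolP (h \in x ^: G)%g; last first.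
  rewrite big1 // => a Ga; case: eqP => // xa_h.
  by case/negP: nxGh; rewrite -xa_h memJ_class.
rewrite mulr1n (reindex_acts 'R _ Gd) ?astabsR //= -sum1_card natr_sum.
rewrite big_mkcond [RHS]big_mkcond /=; apply: eq_bigr => a _.
rewrite conjgM (inj_eq (conjg_inj _)) inE; case: (a \in G) => //=.
by rewrite cent1E conjgE (canF_eq (mulKVg a)) eq_sym; case: eqP.
Qed.

Section MkCF.
Variables (aT : finGroupType) (H : {group aT}).
Implicit Types f g : aT -> algC.

Lemma mkCF_id f (phi : 'CF(H)) : {in H, f =1 phi} -> mkCF H f = phi.
Proof.
move=> f_phi; rewrite /mkCF -[RHS](valKd (0 : 'CF(H)) phi); congr insubd.
apply/ffunP => x.
have [Hx|nHx] := boolP (x \in H); first by rewrite ffunE Hx mul1r f_phi.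
by rewrite ffunE (negbTE nHx) mul0r -[\val phi x]/(phi x) cfun0.
Qed.

Lemma eq_mkCF f g : {in H, f =1 g} -> mkCF H f = mkCF H g.
Proof.
move=> fg; rewrite /mkCF; congr insubd; apply/ffunP => x; rewrite !ffunE.
by have [/fg->|] := boolP (x \in H); rewrite ?mul0r.
Qed.

Lemma mkCFE f : {in H &, forall x y, f (x ^ y)%g = f x} ->
  forall x, mkCF H f x = (x \in H)%:R * f x.
Proof.
move=> fJ x.
have cf : is_class_fun <<H>>%g [ffun x => (x \in H)%:R * f x].
  rewrite genGid; apply: intro_class_fun => [y z Hy Hz | y /negbTE->]; last by rewrite mul0r.
  by rewrite groupJ // Hy fJ.
by rewrite /mkCF /fun_of_cfun /= insubdK // ffunE.
Qed.

End MkCF.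

(** * The wreath product G wr S_2 *)

Section WreathSquare.
Variable gT : finGroupType.
Implicit Types (a b c d g h : gT) (s t : bool).

Lemma wr_mulE a b c d s t :
  (((a, b, s) : wr_type gT) * (c, d, t))%g =
  if s then ((a * d)%g, (b * c)%g, s (+) t) else ((a * c)%g, (b * d)%g, s (+) t).
Proof. by []. Qed.

Lemma wr_invE a b s :
  (((a, b, s) : wr_type gT)^-1)%g = if s then (b^-1, a^-1, s)%g else (a^-1, b^-1, s)%g.
Proof. by []. Qed.

Lemma wr_conjgE g1 g2 a b s t :
  (((g1, g2, s) : wr_type gT) ^ (a, b, t))%g =
  if s then
    if t then ((b^-1 * g2 * a)%g, (a^-1 * g1 * b)%g, true)
    else ((a^-1 * g1 * b)%g, (b^-1 * g2 * a)%g, true)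
  else if t then (g2 ^ b, g1 ^ a, false)%g else (g1 ^ a, g2 ^ b, false)%g.
Proof. by rewrite conjgE wr_invE; case: s; case: t; rewrite !wr_mulE /= ?conjgE ?mulgA. Qed.

Lemma sum_wr_type (V : nmodType) (F : wr_type gT -> V) :
  \sum_(x : wr_type gT) F x = \sum_a \sum_b \sum_s F (a, b, s).
Proof. by rewrite pair_bigA /= pair_bigA /=; apply: eq_bigr => -[[]]. Qed.

Variable G : {group gT}.

Lemma mem_SG2 (x : wr_type gT) : (x \in SG2 G) = (x.1.1 \in G) && (x.1.2 \in G).
Proof.
rewrite /SG2 /= gen_set_id ?inE //; apply/group_setP; split; first by rewrite inE !group1.
move=> [[a b] s] [[c d] t]; rewrite !inE /= => /andP[Ga Gb] /andP[Gc Gd].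
by case: s; rewrite /= !groupM.
Qed.

Lemma mem_HG1 (x : wr_type gT) : (x \in HG1 G) = (x.1.1 \in G) && (x.1.1 == x.1.2).
Proof.
rewrite /HG1 /= gen_set_id ?inE //; apply/group_setP; split; first by rewrite inE group1 eqxx.
move=> [[a b] s] [[c d] t]; rewrite !inE /= => /andP[Ga /eqP<-] /andP[Gc /eqP<-].
by case: s; rewrite /= groupM ?eqxx.
Qed.

Lemma mem_SG1xSG1 (x : wr_type gT) :
  (x \in SG1xSG1 G) = [&& x.1.1 \in G, x.1.2 \in G & ~~ x.2].
Proof.
rewrite /SG1xSG1 /= gen_set_id ?inE //; apply/group_setP; split; first by rewrite inE !group1.
move=> [[a b] s] [[c d] t]; rewrite !inE /=.
by move=> /and3P[Ga Gb /negbTE->] /and3P[Gc Gd /negbTE->]; rewrite /= !groupM.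
Qed.

Lemma HG1_sub_SG2 : HG1 G \subset SG2 G.
Proof. by apply/subsetP=> x; rewrite mem_HG1 mem_SG2 => /andP[Gx /eqP<-]; rewrite Gx. Qed.

Lemma SG1xSG1_sub_SG2 : SG1xSG1 G \subset SG2 G.
Proof. by apply/subsetP=> x; rewrite mem_SG1xSG1 mem_SG2 => /and3P[-> ->]. Qed.

Lemma sum_SG2 (V : nmodType) (F : wr_type gT -> V) :
  \sum_(x in SG2 G) F x = \sum_(a in G) \sum_(b in G) (F (a, b, false) + F (a, b, true)).
Proof.
rewrite big_mkcond sum_wr_type [RHS]big_mkcond; apply: eq_bigr => a _.
have [Ga|nGa] := boolP (a \in G); last first.
  by rewrite big1 // => b _; rewrite big_bool !mem_SG2 /= (negbTE nGa) addr0.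
rewrite [RHS]big_mkcond /=; apply: eq_bigr => b _.
by rewrite big_bool /= !mem_SG2 /= Ga; case: (b \in G); rewrite ?addr0 // addrC.
Qed.

Lemma sum_HG1 (V : nmodType) (F : wr_type gT -> V) :
  \sum_(x in HG1 G) F x = \sum_(a in G) (F (a, a, false) + F (a, a, true)).
Proof.
rewrite big_mkcond sum_wr_type [RHS]big_mkcond; apply: eq_bigr => a _.
rewrite (bigD1 a) //= [X in _ + X]big1 ?addr0 => [|b nba].
  by rewrite big_bool !mem_HG1 /= eqxx andbT; case: (a \in G); rewrite ?addr0 // addrC.
by rewrite big1 // => t _; rewrite mem_HG1 /= eq_sym (negbTE nba) andbF.
Qed.

Lemma sum_SG1xSG1 (V : nmodType) (F : wr_type gT -> V) :
  \sum_(x in SG1xSG1 G) F x = \sum_(a in G) \sum_(b in G) F (a, b, false).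
Proof.
rewrite big_mkcond sum_wr_type [RHS]big_mkcond; apply: eq_bigr => a _.
have [Ga|nGa] := boolP (a \in G); last first.
  by rewrite big1 // => b _; rewrite big_bool !mem_SG1xSG1 /= (negbTE nGa) addr0.
rewrite [RHS]big_mkcond /=; apply: eq_bigr => b _.
by rewrite big_bool /= !mem_SG1xSG1 /= Ga andbT andbF; case: (b \in G); rewrite ?addr0 // add0r.
Qed.

Lemma card_HG1 : #|HG1 G| = (#|G| * 2)%N.
Proof.
apply/eqP; rewrite -(eqr_nat algC) natrM -!sum1_card !natr_sum sum_HG1 mulr_suml.
by apply/eqP/eq_bigr => a _; rewrite mul1r mulr2n.
Qed.

Lemma card_SG1xSG1 : #|SG1xSG1 G| = (#|G| * #|G|)%N.
Proof.
apply/eqP; rewrite -(eqr_nat algC) natrM -!sum1_card !natr_sum sum_SG1xSG1 mulr_suml.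
by apply/eqP/eq_bigr => a _; rewrite mul1r.
Qed.

End WreathSquare.

(** * Tensor squares *)

Section SwapTensor.
Variables (R : comPzRingType) (n : nat).
Implicit Types (A B C D : 'M[R]_n) (s t : bool).

Definition mxvec_pair (k : 'I_(n * n)) : 'I_n * 'I_n :=
  enum_val (cast_ord (esym (mxvec_cast n n)) k).

Lemma mxvec_indexK i j : mxvec_pair (mxvec_index i j) = (i, j).
Proof. by rewrite /mxvec_pair cast_ordK enum_rankK. Qed.

Lemma mxvec_pair_inj : injective mxvec_pair.
Proof.
move=> k l; case/mxvec_indexP: k => i j; case/mxvec_indexP: l => p q.
by rewrite !mxvec_indexK => -[-> ->].
Qed.

Lemma sum_mxvec_pair (F : 'I_n * 'I_n -> R) :
  \sum_(k < n * n) F (mxvec_pair k) = \sum_(i < n) \sum_(j < n) F (i, j).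
Proof.
rewrite pair_bigA (reindex (uncurry (@mxvec_index n n))) /=; last exact: curry_mxvec_bij.
by apply: eq_bigr => -[i j] _; rewrite mxvec_indexK.
Qed.

Definition tensmx2_coef s A B (ij pq : 'I_n * 'I_n) : R :=
  if s then A ij.2 pq.1 * B ij.1 pq.2 else A ij.1 pq.1 * B ij.2 pq.2.

(* For [s = true] this is the Kronecker product [A ⊗ B] composed with the flip
   of the two tensor factors. *)
Definition tensmx2 s A B : 'M[R]_(n * n) :=
  \matrix_(k, l) tensmx2_coef s A B (mxvec_pair k) (mxvec_pair l).

Lemma tensmx2_1 : tensmx2 false 1%:M 1%:M = 1%:M.
Proof.
apply/matrixP => k l; rewrite !mxE /tensmx2_coef -(inj_eq mxvec_pair_inj).
case: (mxvec_pair k) => i j; case: (mxvec_pair l) => p q /=; rewrite !mxE xpair_eqE.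
by case: (i == p); case: (j == q); rewrite ?mulr1 ?mulr0 ?mul0r.
Qed.

Lemma mul_tensmx2 s t A B C D :
  tensmx2 s A B *m tensmx2 t C D =
  tensmx2 (s (+) t) (if t then B *m C else A *m C) (if t then A *m D else B *m D).
Proof.
apply/matrixP => k l; rewrite !mxE; under eq_bigr do rewrite !mxE.
rewrite (sum_mxvec_pair (fun p => tensmx2_coef s A B _ p * tensmx2_coef t C D p _)).
rewrite /tensmx2_coef; case: (mxvec_pair k) => i j; case: (mxvec_pair l) => p q.
case: t; [rewrite [LHS]exchange_big |]; case: s; rewrite /= !mxE mulr_suml;
  apply: eq_bigr => u _; rewrite mulr_sumr; apply: eq_bigr => v _; ring.
Qed.

Lemma mxtrace_tensmx2 s A B :
  \tr (tensmx2 s A B) = if s then \tr (B *m A) else \tr A * \tr B.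
Proof.
rewrite /mxtrace; under eq_bigr do rewrite mxE.
rewrite (sum_mxvec_pair (fun p => tensmx2_coef s A B p p)) /tensmx2_coef.
case: s; last by rewrite mulr_suml; apply: eq_bigr => i _; rewrite mulr_sumr.
by apply: eq_bigr => i _; rewrite mxE; apply: eq_bigr => j _; rewrite mulrC.
Qed.

End SwapTensor.

Definition S2_linear (eps : bool -> algC) : Prop :=
  eps false = 1 /\ {morph eps : s t / s (+) t >-> s * t}.

Lemma S2_linear1 : S2_linear (fun _ => 1).
Proof. by split=> // s t; rewrite mulr1. Qed.

Lemma S2_linear_sgnb : S2_linear sgnb.
Proof. by split=> // [[] []] /=; rewrite ?mulrNN ?mulr1 ?mul1r. Qed.

Section TensorSquare.
Variables (gT : finGroupType) (G : {group gT}).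

Definition tensor_sq_cf (eps : bool -> algC) (chi : 'CF(G)) : 'CF(SG2 G) :=
  mkCF (SG2 G) (fun x => tensor2_trace chi x * eps x.2).

Variables (eps : bool -> algC) (eps_lin : S2_linear eps).
Variables (n : nat) (rG : mx_representation algC G n).

Definition tensor_sq_mx (x : wr_type gT) : 'M[algC]_(n * n) :=
  let: (g1, g2, s) := x in
  eps s *: (if s then tensmx2 true (rG g2) (rG g1) else tensmx2 false (rG g1) (rG g2)).

Lemma tensor_sq_mx_repr : mx_repr (SG2 G) tensor_sq_mx.
Proof.
have [eps0 epsM] := eps_lin.
split=> [|[[a b] s] [[c d] t]]; first by rewrite /= eps0 scale1r repr_mx1 tensmx2_1.
rewrite !mem_SG2 /= => /andP[Ga Gb] /andP[Gc Gd].
rewrite wr_mulE -scalemxAl -scalemxAr scalerA -epsM.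
by case: s; case: t; rewrite /= mul_tensmx2 -?repr_mxM.
Qed.

Definition tensor_sq_repr := MxRepresentation tensor_sq_mx_repr.

Lemma tensor_sq_trace :
  {in SG2 G, forall x, tensor2_trace (cfRepr rG) x * eps x.2 = cfRepr tensor_sq_repr x}.
Proof.
move=> -[[a b] s]; rewrite mem_SG2 /= => /andP[Ga Gb].
rewrite cfunE mem_SG2 /= Ga Gb mulr1n mxtraceZ mulrC /tensor2_trace /=.
by case: s; rewrite mxtrace_tensmx2 !cfunE ?groupM ?Ga ?Gb // ?repr_mxM // !mulr1n.
Qed.

Lemma tensor_sq_cf_Repr : tensor_sq_cf eps (cfRepr rG) = cfRepr tensor_sq_repr.
Proof. exact: mkCF_id tensor_sq_trace. Qed.

End TensorSquare.

Section TensorSquareChar.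
Variables (gT : finGroupType) (G : {group gT}) (chi : 'CF(G)).
Hypothesis Nchi : chi \is a character.

Lemma tensor_sq_cf_char eps : S2_linear eps -> tensor_sq_cf eps chi \is a character.
Proof.
move=> eps_lin; have [[n rG] ->] := char_reprP Nchi.
by rewrite (tensor_sq_cf_Repr eps_lin) cfRepr_char.
Qed.

Lemma tensor_sq_cfE eps : S2_linear eps ->
  {in SG2 G, forall x, tensor_sq_cf eps chi x = tensor2_trace chi x * eps x.2}.
Proof.
move=> eps_lin x Gx; have [[n rG] ->] := char_reprP Nchi.
by rewrite (tensor_sq_cf_Repr eps_lin) -tensor_sq_trace.
Qed.

Lemma S2chi_tensor_sq : S2chi chi = tensor_sq_cf (fun _ => 1) chi.
Proof. by apply: eq_mkCF => x _; rewrite mulr1. Qed.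

Lemma S2chiE : {in SG2 G, forall x, S2chi chi x = tensor2_trace chi x}.
Proof. by move=> x Gx; rewrite S2chi_tensor_sq (tensor_sq_cfE S2_linear1) ?mulr1. Qed.

Lemma S11chiE : {in SG2 G, forall x, S11chi chi x = tensor2_trace chi x * sgnb x.2}.
Proof. exact: tensor_sq_cfE S2_linear_sgnb. Qed.

End TensorSquareChar.

(** * Characters induced from HG_1 *)

Lemma xi_tensorE (gT : finGroupType) (G : {group gT}) (xi : 'CF(G)) eps x :
  xi_tensor xi eps x = (x \in HG1 G)%:R * (xi x.1.1 * eps x.2).
Proof.
apply: mkCFE => -[[a b] s] [[c d] t]; rewrite !mem_HG1 /=.
move=> /andP[Ga /eqP<-] /andP[Gc /eqP<-].
by rewrite wr_conjgE; case: s; case: t; rewrite /= -?mulgA -?conjgE cfunJ.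
Qed.

Section XiTensor.
Variables (gT : finGroupType) (G : {group gT}) (xi : 'CF(G)).
Hypothesis Lxi : xi \is a linear_char.
Variables (eps : bool -> algC) (eps_lin : S2_linear eps).

Definition xi_tensor_mx (x : wr_type gT) : 'M[algC]_1 := (xi x.1.1 * eps x.2)%:M.

Lemma xi_tensor_mx_repr : mx_repr (HG1 G) xi_tensor_mx.
Proof.
have [eps0 epsM] := eps_lin.
split=> [|[[a b] s] [[c d] t]]; first by rewrite /xi_tensor_mx /= lin_char1 // eps0 mulr1.
rewrite !mem_HG1 /= => /andP[Ga /eqP<-] /andP[Gc /eqP<-].
rewrite /xi_tensor_mx wr_mulE -scalar_mxM mulrACA -epsM.
by case: s; rewrite /= lin_charM.
Qed.

Lemma xi_tensor_char : xi_tensor xi eps \is a character.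
Proof.
pose rxi := MxRepresentation xi_tensor_mx_repr.
rewrite /xi_tensor (@mkCF_id _ _ _ (cfRepr rxi)) ?cfRepr_char //.
by move=> x Hx; rewrite cfunE Hx mulr1n mxtrace_scalar.
Qed.

End XiTensor.

Definition root2_sum (gT : finGroupType) (G : {group gT}) (xi : 'CF(G)) (h : gT) : algC :=
  \sum_(u in G) ((u * u)%g == h)%:R * xi u.

Section InducedValues.
Variables (gT : finGroupType) (G : {group gT}) (xi : 'CF(G)).
Variables (eps : bool -> algC) (eps_lin : S2_linear eps).
Variables (g1 g2 : gT) (G1 : g1 \in G) (G2 : g2 \in G).

Lemma cfInd_xi_tensor_id :
  'Ind[SG2 G] (xi_tensor xi eps) (g1, g2, false) =
    (#|'C_G[g1]%g|%:R * xi g2) *+ (g1 \in g2 ^: G)%g.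
Proof.
have [eps0 _] := eps_lin.
have conj_sum a b : a \in G -> b \in G ->
    xi_tensor xi eps (((g1, g2, false) : wr_type gT) ^ (a, b, false))%g
    + xi_tensor xi eps (((g1, g2, false) : wr_type gT) ^ (a, b, true))%g
    = 2%:R * (((g1 ^ a)%g == (g2 ^ b)%g)%:R * xi g2).
  move=> Ga Gb; rewrite !wr_conjgE !xi_tensorE !mem_HG1 /= !groupJ // eps0 mulr1 eq_sym.
  case: eqP => [xE|_]; last by rewrite !mul0r mulr0 addr0.
  by rewrite -xE !cfunJ //=; ring.
rewrite cfIndE ?HG1_sub_SG2 // sum_SG2 card_HG1.
under eq_bigr => a Ga do under eq_bigr => b Gb do rewrite conj_sum //.
rewrite exchange_big /=.
under eq_bigr => b Gb do rewrite -mulr_sumr -mulr_suml sum_conjg_eq // class_sym classGidl //.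
rewrite sumr_const natrM.
case: (g1 \in g2 ^: G)%g; last by rewrite !mulr0n ?mul0r ?mulr0 ?mul0rn ?mulr0.
rewrite !mulr1n -mulr_natr; field; exact: neq0CG.
Qed.

Lemma cfInd_xi_tensor_swap :
  'Ind[SG2 G] (xi_tensor xi eps) (g1, g2, true) = eps true * root2_sum xi (g1 * g2)%g.
Proof.
have conj_sum a b : a \in G -> b \in G ->
    xi_tensor xi eps (((g1, g2, true) : wr_type gT) ^ (a, b, false))%g
    + xi_tensor xi eps (((g1, g2, true) : wr_type gT) ^ (a, b, true))%g
    = 2%:R * eps true *
      (((a^-1 * g1 * b)%g == (b^-1 * g2 * a)%g)%:R * xi (a^-1 * g1 * b)%g).
  move=> Ga Gb; rewrite !wr_conjgE !xi_tensorE // !mem_HG1 /= !groupM ?groupV //=.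
  rewrite (eq_sym (b^-1 * g2 * a)%g); case: eqP => [xE|_]; last by rewrite !mul0r mulr0 addr0.
  by rewrite -xE /=; ring.
have sum_b a : a \in G ->
    \sum_(b in G) (((a^-1 * g1 * b)%g == (b^-1 * g2 * a)%g)%:R * xi (a^-1 * g1 * b)%g)
    = root2_sum xi (g1 * g2)%g.
  (* The substitution b = g1^-1 a u^a turns the condition into u^2 = g1 g2. *)
  move=> Ga; pose c := (g1^-1 * a)%g; have Gc : c \in G by rewrite groupM ?groupV.
  rewrite (reindex_inj (mulgI c)) /= (eq_bigl (mem G)) => [|b]; last by rewrite groupMl.
  rewrite (reindex_acts 'J _ Ga) ?astabsJ ?normG //=; apply: eq_bigr => u Gu.
  have left_c v : (a^-1 * g1 * (c * v))%g = v by rewrite !mulgA mulgK mulVg mul1g.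
  have right_c v : ((c * v)^-1 * g2 * a)%g = (v^-1 * (g1 * g2) ^ a)%g.
    by rewrite !invMg invgK conjgE !mulgA.
  rewrite left_c right_c -(inj_eq (mulgI (u ^ a)%g)) mulKVg -conjMg.
  by rewrite (inj_eq (conjg_inj _)) cfunJ.
rewrite cfIndE ?HG1_sub_SG2 // sum_SG2 card_HG1.
under eq_bigr => a Ga do under eq_bigr => b Gb do rewrite conj_sum //.
under eq_bigr => a Ga do rewrite -mulr_sumr sum_b //.
rewrite sumr_const natrM -mulr_natr; field; exact: neq0CG.
Qed.

End InducedValues.

Lemma outer_indE (gT : finGroupType) (G : {group gT}) (chi psi : 'CF(G)) g1 g2 s :
  g1 \in G -> g2 \in G ->
  outer_ind chi psi (g1, g2, s) = if s then 0 else chi g1 * psi g2 + chi g2 * psi g1.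
Proof.
move=> G1 G2; rewrite /outer_ind; set phi := mkCF _ _.
have phiE z : phi z = (z \in SG1xSG1 G)%:R * (chi z.1.1 * psi z.1.2).
  apply: mkCFE => -[[p q] t] [[a b] u]; rewrite !mem_SG1xSG1 /=.
  by move=> /and3P[Gp Gq /negbTE->] /and3P[Ga Gb /negbTE->]; rewrite wr_conjgE /= !cfunJ.
have conj_sum a b : a \in G -> b \in G ->
    phi (((g1, g2, s) : wr_type gT) ^ (a, b, false))%g
    + phi (((g1, g2, s) : wr_type gT) ^ (a, b, true))%g
    = if s then 0 else chi g1 * psi g2 + chi g2 * psi g1.
  move=> Ga Gb; rewrite !phiE !wr_conjgE; case: s; rewrite !mem_SG1xSG1 /= ?andbF ?mul0r ?addr0 //.
  by rewrite !groupJ //= !mul1r !cfunJ.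
rewrite cfIndE ?SG1xSG1_sub_SG2 // sum_SG2 card_SG1xSG1.
under eq_bigr => a Ga do under eq_bigr => b Gb do rewrite conj_sum //.
rewrite !sumr_const -mulrnA; clear conj_sum; case: s; first by rewrite mul0rn mulr0.
rewrite -mulr_natr natrM; field; exact: neq0CG.
Qed.

(** * The twisted Frobenius-Schur indicator *)

Section TwistedDual.
Variables (gT : finGroupType) (G : {group gT}) (xi : 'CF(G)).
Hypothesis Lxi : xi \is a linear_char.

Definition twist (i : Iirr G) : Iirr G := cfIirr (xi * ('chi_i)^*%CF).

Lemma twistE i : 'chi_(twist i) = xi * ('chi_i)^*%CF.
Proof. by rewrite cfIirrE // mul_lin_irr // cfConjC_irr. Qed.

Lemma twistK : involutive twist.
Proof.
move=> i; apply: irr_inj.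
by rewrite !twistE rmorphM /= cfConjCK mulrA mul_conjC_lin_char // mul1r.
Qed.

Lemma eq_twist i : ('chi_i == xi * ('chi_i)^*%CF) = (i == twist i).
Proof. by rewrite -twistE (inj_eq irr_inj). Qed.

Let Psi := 'Ind[SG2 G] (xi_tensor xi (fun _ => 1)).

Lemma cfdot_Ind_tensor_sq eps i : S2_linear eps ->
  '[Psi, tensor_sq_cf eps 'chi_i] =
    2^-1 * ((i == twist i)%:R + (eps true)^* * (nu2 xi 'chi_i)^*).
Proof.
move=> eps_lin; have [eps0 _] := eps_lin.
rewrite -Frobenius_reciprocity cfdotE card_HG1 sum_HG1 big_split natrM invfM.
rewrite [_^-1 * _]mulrC -mulrA mulrDr !mulr_sumr; congr (_ * (_ + _)).
  rewrite eq_sym -cfdot_irr cfdotE mulr_sumr; apply: eq_bigr => a Ga.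
  rewrite xi_tensorE // cfResE ?HG1_sub_SG2 ?mem_HG1 /= ?Ga ?eqxx //.
  rewrite tensor_sq_cfE ?irr_char ?mem_SG2 ?Ga //= eps0 twistE !cfunE.
  by rewrite /tensor2_trace /= !mul1r !mulr1 rmorphM [xi a * _]mulrA.
rewrite /nu2 rmorphM fmorphV /= conjC_nat rmorph_sum mulrCA !mulr_sumr; apply: eq_bigr => a Ga.
rewrite xi_tensorE // cfResE ?HG1_sub_SG2 ?mem_HG1 /= ?Ga ?eqxx //.
rewrite tensor_sq_cfE ?irr_char ?mem_SG2 ?Ga //= /tensor2_trace /=.
by rewrite !rmorphM /= conjCK expgS expg1; ring.
Qed.

Lemma nu2_irr_multiplicities i : exists n1 n2 : nat,
  (n1 + n2 = (i == twist i))%N /\ nu2 xi 'chi_i = n1%:R - n2%:R.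
Proof.
have Psi_char : Psi \is a character by apply/cfInd_char/xi_tensor_char/S2_linear1.
have /natrP[n1 N1] := Cnat_cfdot_char Psi_char (tensor_sq_cf_char (irr_char i) S2_linear1).
have /natrP[n2 N2] :=
  Cnat_cfdot_char Psi_char (tensor_sq_cf_char (irr_char i) S2_linear_sgnb).
rewrite (cfdot_Ind_tensor_sq _ S2_linear1) conjC1 mul1r in N1.
rewrite (cfdot_Ind_tensor_sq _ S2_linear_sgnb) conjCN1 mulN1r in N2.
exists n1, n2; split.
  by apply/eqP; rewrite -(eqr_nat algC) natrD -N1 -N2; apply/eqP; field.
rewrite -[nu2 _ _]conjCK (_ : (nu2 xi 'chi_i)^* = n1%:R - n2%:R).
  by rewrite rmorphB /= !conjC_nat.
by rewrite -N1 -N2; field.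
Qed.

Lemma nu2_irr_neq i : i != twist i -> nu2 xi 'chi_i = 0.
Proof.
move=> /negbTE nfix_i; have [n1 [n2 [n12 ->]]] := nu2_irr_multiplicities i.
rewrite nfix_i in n12; have [-> ->] : n1 = 0%N /\ n2 = 0%N by lia.
by rewrite subrr.
Qed.

Lemma nu2_irr_eq i : i == twist i -> nu2 xi 'chi_i = 1 \/ nu2 xi 'chi_i = -1.
Proof.
have [n1 [n2 [n12 ->]]] := nu2_irr_multiplicities i.
move=> fix_i; rewrite fix_i in n12.
have [[-> ->]|[-> ->]] : (n1 = 1 /\ n2 = 0 \/ n1 = 0 /\ n2 = 1)%N by lia.
  by left; rewrite subr0.
by right; rewrite sub0r.
Qed.

End TwistedDual.

Section TwistedSums.
Variables (gT : finGroupType) (G : {group gT}) (xi : 'CF(G)).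
Hypothesis Lxi : xi \is a linear_char.

Lemma nu2_irr_real i : (nu2 xi 'chi_i)^* = nu2 xi 'chi_i.
Proof.
have [fix_i|moved_i] := boolP (i == twist xi i); last by rewrite nu2_irr_neq ?conjC0.
by case: (nu2_irr_eq Lxi fix_i) => ->; rewrite ?conjC1 ?conjCN1.
Qed.

Lemma self_twist_nu2 i (e : algC) : e != 0 ->
  ('chi_i == xi * ('chi_i)^*%CF) && (nu2 xi 'chi_i == e) = (nu2 xi 'chi_i == e).
Proof.
move=> nz_e; rewrite eq_twist //; have [//|moved_i] := boolP (i == twist xi i).
by rewrite nu2_irr_neq // eq_sym (negbTE nz_e).
Qed.

Lemma root2_sum_irr h : h \in G -> root2_sum xi h = \sum_i nu2 xi 'chi_i * 'chi_i h.
Proof.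
move=> Gh.
have nu_chi i : nu2 xi 'chi_i * 'chi_i h =
    #|G|%:R^-1 * \sum_(g in G) xi g * ('chi_i h * ('chi_i (g * g)%g)^*).
  rewrite -nu2_irr_real /nu2 rmorphM fmorphV /= conjC_nat rmorph_sum -mulrA mulr_suml.
  congr (_ * _); apply: eq_bigr => g Gg; rewrite rmorphM /= conjCK expgS expg1; ring.
rewrite (eq_bigr _ (fun i _ => nu_chi i)) -mulr_sumr exchange_big /=.
have sum_irr g : g \in G -> \sum_i xi g * ('chi[G]_i h * ('chi_i (g * g)%g)^*)
     = \sum_(c in G) (((h ^ c)%g == (g * g)%g)%:R * xi g).
  move=> Gg; rewrite -mulr_sumr second_orthogonality_relation ?groupM //.
  by rewrite -mulr_suml sum_conjg_eq // class_sym mulrC.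
rewrite (eq_bigr _ sum_irr) exchange_big /=.
have sum_conj c : c \in G ->
    \sum_(g in G) (((h ^ c)%g == (g * g)%g)%:R * xi g) = root2_sum xi h.
  move=> Gc; rewrite (reindex_acts 'J _ Gc) ?astabsJ ?normG //=; apply: eq_bigr => g Gg.
  by rewrite -conjMg (inj_eq (conjg_inj _)) eq_sym cfunJ.
by rewrite (eq_bigr _ sum_conj) sumr_const -[_ *+ #|G|]mulr_natl mulKf ?neq0CG.
Qed.

Lemma root2_sum_split h : h \in G ->
  root2_sum xi h =
    \sum_(i | ('chi_i == xi * ('chi_i)^*%CF) && (nu2 xi 'chi_i == 1)) 'chi_i h
  - \sum_(i | ('chi_i == xi * ('chi_i)^*%CF) && (nu2 xi 'chi_i == -1)) 'chi_i h.
Proof.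
move=> Gh; rewrite root2_sum_irr // (bigID (fun i => nu2 xi 'chi_i == 1)) /=.
rewrite (bigID (fun i => nu2 xi 'chi_i == -1) (fun i => nu2 xi 'chi_i != 1)) /=.
rewrite [X in _ + (_ + X)]big1 ?addr0 => [|i /andP[nu_n1 nu_nN1]]; last first.
  have [fix_i|moved_i] := boolP (i == twist xi i); last by rewrite nu2_irr_neq ?mul0r.
  by case: (nu2_irr_eq Lxi fix_i) => nu_i; rewrite nu_i eqxx in nu_n1 nu_nN1.
rewrite -sumrN; congr (_ + _); apply: eq_big => i.
- by rewrite self_twist_nu2 ?oner_neq0.
- by move/eqP->; rewrite mul1r.
- rewrite self_twist_nu2 ?oppr_eq0 ?oner_neq0 //.
  by case: eqP => // ->; rewrite (negbTE (oner_neqN1 _)).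
- by move=> /andP[_ /eqP->]; rewrite mulN1r.
Qed.

Lemma sum_irr_twist g1 g2 : g2 \in G ->
  \sum_i 'chi_i g1 * 'chi_(twist xi i) g2 =
    (#|'C_G[g1]%g|%:R * xi g2) *+ (g1 \in g2 ^: G)%g.
Proof.
move=> G2; rewrite -mulrnAl -second_orthogonality_relation // mulr_suml.
by apply: eq_bigr => i _; rewrite twistE // !cfunE; ring.
Qed.

Lemma sum_self_twist (F : Iirr G -> algC) :
  \sum_(i | i == twist xi i) F i =
    \sum_(i | ('chi_i == xi * ('chi_i)^*%CF) && (nu2 xi 'chi_i == 1)) F i
  + \sum_(i | ('chi_i == xi * ('chi_i)^*%CF) && (nu2 xi 'chi_i == -1)) F i.
Proof.
rewrite (bigID (fun i => nu2 xi 'chi_i == 1)) /=; congr (_ + _); apply: eq_bigl => i.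
  by rewrite eq_twist.
rewrite eq_twist //; have [fix_i|//] := boolP (i == twist xi i).
have /negbTE N1_neq1 := oner_neqN1 algC.
by case: (nu2_irr_eq Lxi fix_i) => ->; rewrite eqxx ?N1_neq1 // eq_sym N1_neq1.
Qed.

Lemma sum_irr_twist_orbits (P : {set Iirr G}) g1 g2 :
    (forall i, i \in P -> 'chi_i != xi * ('chi_i)^*%CF) ->
    (forall i j : Iirr G, 'chi_j = xi * ('chi_i)^*%CF -> i != j ->
       (i \in P) != (j \in P)) ->
    g2 \in G ->
  \sum_(i | ('chi_i == xi * ('chi_i)^*%CF) && (nu2 xi 'chi_i == 1)) ('chi_i g1 * 'chi_i g2)
  + \sum_(i | ('chi_i == xi * ('chi_i)^*%CF) && (nu2 xi 'chi_i == -1)) ('chi_i g1 * 'chi_i g2)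
  + \sum_(i in P) ('chi_i g1 * (xi * ('chi_i)^*%CF) g2 + 'chi_i g2 * (xi * ('chi_i)^*%CF) g1)
  = (#|'C_G[g1]%g|%:R * xi g2) *+ (g1 \in g2 ^: G)%g.
Proof.
move=> P_moved P_choice G2; rewrite -sum_irr_twist //.
rewrite (@sum_involution _ _ _ P _ (twistK Lxi)) => [|i Pi|i]; first last.
- by apply: P_choice; rewrite twistE.
- by rewrite -eq_twist ?P_moved.
rewrite -sum_self_twist; congr (_ + _).
  by apply: eq_bigr => i /eqP <-.
by apply: eq_bigr => i _; rewrite (twistK Lxi) twistE // [_ * 'chi_i g2]mulrC.
Qed.

End TwistedSums.

Unset Implicit Arguments.

Theorem proposition3p4 (gT : finGroupType) (G : {group gT}) (xi : 'CF(G))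
  (Hxi : xi \is a linear_char)
  (P : {set Iirr G})
  (HP1 : forall i, i \in P -> 'chi_i != xi * ('chi_i)^*%CF)
  (HP2 : forall i j : Iirr G, 'chi_j = xi * ('chi_i)^*%CF -> i != j ->
           (i \in P) != (j \in P)) :
  'Ind[SG2 G] (xi_tensor xi (fun _ => 1)) =
    \sum_(i : Iirr G | ('chi_i == xi * ('chi_i)^*%CF) && (nu2 xi 'chi_i == 1))
        S2chi 'chi_i
    + \sum_(i : Iirr G | ('chi_i == xi * ('chi_i)^*%CF) && (nu2 xi 'chi_i == -1))
        S11chi 'chi_i
    + \sum_(i in P) outer_ind 'chi_i (xi * ('chi_i)^*%CF)
  /\
  'Ind[SG2 G] (xi_tensor xi sgnb) =
    \sum_(i : Iirr G | ('chi_i == xi * ('chi_i)^*%CF) && (nu2 xi 'chi_i == 1))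
        S11chi 'chi_i
    + \sum_(i : Iirr G | ('chi_i == xi * ('chi_i)^*%CF) && (nu2 xi 'chi_i == -1))
        S2chi 'chi_i
    + \sum_(i in P) outer_ind 'chi_i (xi * ('chi_i)^*%CF).
Proof.
split; apply/cfunP => -[[g1 g2] s].
all: have [Gx|nGx] := boolP ((g1, g2, s) \in SG2 G); last by rewrite !cfun0.
all: move: (Gx); rewrite mem_SG2 /= => /andP[G1 G2]; rewrite !cfunE !sum_cfunE.
all: rewrite (eq_bigr _ (fun i _ => S2chiE (irr_char i) Gx)).
all: rewrite (eq_bigr _ (fun i _ => S11chiE (irr_char i) Gx)).
all: rewrite (eq_bigr _ (fun i _ => outer_indE _ _ s G1 G2)) /tensor2_trace /sgnb /=.
all: case: s {Gx}.
- rewrite big1_eq addr0 cfInd_xi_tensor_swap // mul1r.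
  by rewrite (root2_sum_split Hxi) ?groupM // -mulr_suml mulrN1.
- rewrite -[X in _ + X + _]mulr_suml mulr1 (cfInd_xi_tensor_id _ S2_linear1) //.
  by rewrite (sum_irr_twist_orbits Hxi).
- rewrite big1_eq addr0 cfInd_xi_tensor_swap //.
  by rewrite (root2_sum_split Hxi) ?groupM // -mulr_suml mulrN1 mulN1r opprB addrC.
- rewrite -[X in X + _ + _]mulr_suml mulr1 (cfInd_xi_tensor_id _ S2_linear_sgnb) //.
  by rewrite (sum_irr_twist_orbits Hxi).
Qed.
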